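(* Assume $\delta>d$, $\alpha=\gamma/(\delta-d)$, and that $f$ is not a polynomial product. Let $V\subset\mathbb{C}$ be a set whose closure is contained in $A_p$. Then the functions $$G_n(z,w)=\frac{1}{d^n}\log^+\frac{|w_n|}{|z_n|^\alpha},\qquad (z_n,w_n)=f^n(z,w),$$ converge uniformly on $V\times\mathbb{C}$ to $G_z^\alpha(w)=\lim_{n\to\infty}d^{-n}\log^+\big(|Q_z^n(w)|/|p^n(z)|^\alpha\big)$.
   Context: Let $p(z)=z^\delta+O(z^{\delta-1})$ be a monic polynomial of degree $\delta\ge 2$, and let $q(z,w)=b(z)w^d+(\text{terms of lower degree in } w)$ be a polynomial with $d=\deg_w q\ge 2$, where $b$ is a monic polynomial of degree $\gamma\ge 0$. Let $f(z,w)=(p(z),q(z,w))$; $f$ is a polynomial product if $q$ does not depend on $z$. Write $Q_z^n=q_{p^{n-1}(z)}\circ\cdots\circ q_{p(z)}\circ q_z$ with $q_z=q(z,\cdot)$, so $f^n(z,w)=(p^n(z),Q_z^n(w))$. Let $A_p=\{z: p^n(z)\to\infty\}$. For $\delta>d$, $\alpha=\max\{n_j/(\delta-m_j)\}$ over monomials $z^{n_j}w^{m_j}$ appearing in $q$ with nonzero coefficient. *)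

From Stdlib Require Import Reals Lra.
Open Scope R_scope.

Definition Cx : Type := (R * R)%type.
Definition Czero : Cx := (0, 0).
Definition Cone : Cx := (1, 0).
Definition Cadd (x y : Cx) : Cx := (fst x + fst y, snd x + snd y).
Definition Csub (x y : Cx) : Cx := (fst x - fst y, snd x - snd y).
Definition Cmul (x y : Cx) : Cx :=
  (fst x * fst y - snd x * snd y, fst x * snd y + snd x * fst y).
Fixpoint Cpow (x : Cx) (n : nat) : Cx :=
  match n with O => Cone | S k => Cmul (Cpow x k) x end.
Definition Cnorm (x : Cx) : R := sqrt (fst x * fst x + snd x * snd x).

Fixpoint Csum (f : nat -> Cx) (n : nat) : Cx :=
  match n with O => Czero | S k => Cadd (Csum f k) (f k) end.

Definition peval (delta : nat) (a : nat -> Cx) (z : Cx) : Cx :=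
  Csum (fun i => Cmul (a i) (Cpow z i)) (S delta).

Definition qeval (N d : nat) (c : nat -> nat -> Cx) (z w : Cx) : Cx :=
  Csum (fun j => Cmul (Csum (fun i => Cmul (c i j) (Cpow z i)) (S N)) (Cpow w j)) (S d).

Definition fmap (delta N d : nat) (a : nat -> Cx) (c : nat -> nat -> Cx) (zw : Cx * Cx) : Cx * Cx :=
  (peval delta a (fst zw), qeval N d c (fst zw) (snd zw)).
Definition fiter (delta N d : nat) (a : nat -> Cx) (c : nat -> nat -> Cx) (n : nat) (zw : Cx * Cx) : Cx * Cx :=
  Nat.iter n (fmap delta N d a c) zw.

Definition poly_product (N d : nat) (c : nat -> nat -> Cx) : Prop :=
  forall z1 z2 w, qeval N d c z1 w = qeval N d c z2 w.

Definition A_p (delta : nat) (a : nat -> Cx) (z : Cx) : Prop :=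
  cv_infty (fun n => Cnorm (Nat.iter n (peval delta a) z)).

Definition in_closure (V : Cx -> Prop) (z : Cx) : Prop :=
  forall eps, eps > 0 -> exists v, V v /\ Cnorm (Csub z v) < eps.

Definition Cnz (x : Cx) : bool :=
  if Req_EM_T (fst x) 0 then (if Req_EM_T (snd x) 0 then false else true) else true.

Fixpoint Rmax_upto (f : nat -> R) (n : nat) : R :=
  match n with O => f O | S k => Rmax (Rmax_upto f k) (f (S k)) end.

(* alpha = max { n_j / (delta - m_j) } over monomials z^{n_j} w^{m_j} of q with
   nonzero coefficient (all values are >= 0 and at least one monomial is present,
   so the default 0 for absent monomials does not change the max). *)
Definition alpha (delta N d : nat) (c : nat -> nat -> Cx) : R :=
  Rmax_upto (fun j => Rmax_upto (fun i =>
     if Cnz (c i j) then INR i / INR (delta - j) else 0) N) d.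

Definition logplus (x : R) : R := Rmax 0 (ln x).

Definition Gn (delta N d : nat) (a : nat -> Cx) (c : nat -> nat -> Cx) (al : R)
  (n : nat) (z w : Cx) : R :=
  let zw := fiter delta N d a c n (z, w) in
  / (INR d ^ n) * logplus (Cnorm (snd zw) / Rpower (Cnorm (fst zw)) al).

(** Write [rho = |z|^alpha] and [u = |w| / rho].  Since every monomial
    [z^i w^j] of [q] has weighted degree [i <= alpha (delta - j)], and the
    leading coefficient [b] has exactly [gamma = alpha (delta - d)], for
    [|z|] large we get [|q(z,w)| <= M max(1,u)^d rho^delta] always and
    [|q(z,w)| >= rho^delta u^d / 4] once [u] is large; moreover
    [|p(z)|^alpha] is comparable to [rho^delta].  Taking [log+] this gives the
    key one-step estimate [log_ratio_step]:
      [| log+(|q|/|p|^alpha) - d log+(|w|/|z|^alpha) | <= Cst]  for [|z| >= R].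
    Consequently [|G_(n+1) - G_n| <= Cst / d^n] once [|p^n(z)| >= R].  A
    compactness argument on the closure of [V] (contained in the escaping
    set) shows that this holds for all [z] in [V] after a uniform number of
    steps, and a geometric Cauchy argument gives the uniform limit. *)

From Stdlib Require Import Reals Lra Lia Classical ClassicalEpsilon.
From Coquelicot Require Complex Compactness.
Open Scope R_scope.

Lemma Cnorm_Cmod (x : Cx) : Cnorm x = Complex.Cmod x.
Proof. unfold Cnorm, Complex.Cmod; f_equal; simpl; ring. Qed.

Lemma Cnorm_ge0 (x : Cx) : 0 <= Cnorm x.
Proof. apply sqrt_pos. Qed.

Lemma Cnorm_mul (x y : Cx) : Cnorm (Cmul x y) = Cnorm x * Cnorm y.
Proof. rewrite !Cnorm_Cmod; apply Complex.Cmod_mult. Qed.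

Lemma Cnorm_add (x y : Cx) : Cnorm (Cadd x y) <= Cnorm x + Cnorm y.
Proof. rewrite !Cnorm_Cmod; apply Complex.Cmod_triangle. Qed.

Lemma Cnorm_zero : Cnorm Czero = 0.
Proof. unfold Cnorm, Czero; simpl; rewrite Rmult_0_l, Rplus_0_l; apply sqrt_0. Qed.

Lemma Cnorm_one : Cnorm Cone = 1.
Proof. unfold Cnorm, Cone; simpl; rewrite Rmult_1_l, Rmult_0_l, Rplus_0_r; apply sqrt_1. Qed.

Lemma Cnorm_pow (x : Cx) (n : nat) : Cnorm (Cpow x n) = Cnorm x ^ n.
Proof. induction n as [|n IH]; simpl; [apply Cnorm_one|]. rewrite Cnorm_mul, IH; ring. Qed.

Lemma Cnorm_sub_sym (x y : Cx) : Cnorm (Csub x y) = Cnorm (Csub y x).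
Proof. unfold Cnorm, Csub; simpl; f_equal; ring. Qed.

Lemma Cnorm_sub_ge (x y : Cx) : Cnorm x - Cnorm y <= Cnorm (Csub x y).
Proof.
  pose proof (Cnorm_add (Csub x y) y) as H.
  replace (Cadd (Csub x y) y) with x in H by (unfold Cadd, Csub; destruct x; simpl; f_equal; ring).
  lra.
Qed.

Lemma Cnorm_add_ge (x y : Cx) : Cnorm x - Cnorm y <= Cnorm (Cadd x y).
Proof.
  pose proof (Cnorm_sub_ge x (Csub Czero y)) as H.
  replace (Csub x (Csub Czero y)) with (Cadd x y) in H
    by (unfold Cadd, Csub, Czero; simpl; f_equal; ring).
  replace (Cnorm (Csub Czero y)) with (Cnorm y) in H
    by (unfold Cnorm, Csub, Czero; simpl; f_equal; ring).
  exact H.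
Qed.

Lemma Rabs_fst_le (x : Cx) : Rabs (fst x) <= Cnorm x.
Proof. rewrite Cnorm_Cmod; apply Complex.re_le_Cmod. Qed.

Lemma Rabs_snd_le (x : Cx) : Rabs (snd x) <= Cnorm x.
Proof.
  rewrite <- sqrt_Rsqr_abs; apply sqrt_le_1_alt; unfold Rsqr.
  pose proof (Rle_0_sqr (fst x)); unfold Rsqr in *; lra.
Qed.

Fixpoint Rsum (f : nat -> R) (n : nat) : R :=
  match n with O => 0 | S k => Rsum f k + f k end.

Lemma Rsum_le (f g : nat -> R) (n : nat) :
  (forall i, (i < n)%nat -> f i <= g i) -> Rsum f n <= Rsum g n.
Proof.
  induction n as [|n IH]; simpl; intros H; [lra|].
  pose proof (H n ltac:(lia)). pose proof (IH ltac:(intros; apply H; lia)). lra.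
Qed.

Lemma Rsum_ge0 (f : nat -> R) (n : nat) : (forall i, 0 <= f i) -> 0 <= Rsum f n.
Proof. intros H; induction n as [|n IH]; simpl; [lra|]. pose proof (H n); lra. Qed.

Lemma Rsum_scal (k : R) (f : nat -> R) (n : nat) : Rsum (fun i => k * f i) n = k * Rsum f n.
Proof. induction n as [|n IH]; simpl; [ring|]. rewrite IH; ring. Qed.

Lemma Csum_norm (f : nat -> Cx) (n : nat) : Cnorm (Csum f n) <= Rsum (fun i => Cnorm (f i)) n.
Proof.
  induction n as [|n IH]; simpl; [rewrite Cnorm_zero; lra|].
  pose proof (Cnorm_add (Csum f n) (f n)); lra.
Qed.

Lemma Csum_dominant (f : nat -> Cx) (g : nat -> R) (n k : nat) :
  (k < n)%nat -> (forall i, 0 <= g i) ->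
  (forall i, (i < n)%nat -> i <> k -> Cnorm (f i) <= g i) ->
  Cnorm (f k) - Rsum g n <= Cnorm (Csum f n).
Proof.
  revert k; induction n as [|n IH]; intros k Hk Hg Hf; [lia|]; simpl.
  destruct (Nat.eq_dec k n) as [->|Hne].
  - assert (Hsum : Cnorm (Csum f n) <= Rsum g n).
    { eapply Rle_trans; [apply Csum_norm|]. apply Rsum_le; intros i Hi; apply Hf; lia. }
    pose proof (Cnorm_add_ge (f n) (Csum f n)) as Hrev.
    replace (Cadd (f n) (Csum f n)) with (Cadd (Csum f n) (f n)) in Hrev
      by (unfold Cadd; f_equal; ring).
    pose proof (Hg n); lra.
  - pose proof (IH k ltac:(lia) Hg ltac:(intros; apply Hf; lia)).
    pose proof (Cnorm_add_ge (Csum f n) (f n)). pose proof (Hf n ltac:(lia) ltac:(lia)). lra.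
Qed.

Lemma peval_growth (delta : nat) (a : nat -> Cx) :
  a delta = Cone -> (1 <= delta)%nat ->
  exists R0, 2 <= R0 /\ forall z, R0 <= Cnorm z ->
    Cnorm z ^ delta / 2 <= Cnorm (peval delta a z) <= 2 * Cnorm z ^ delta.
Proof.
  intros Ha Hd.
  set (A := Rsum (fun i => Cnorm (a i)) delta).
  assert (HA : 0 <= A) by (apply Rsum_ge0; intros; apply Cnorm_ge0).
  exists (Rmax 2 (2 * A + 1)); split; [apply Rmax_l|]. intros z Hz.
  set (r := Cnorm z) in *.
  assert (Hr2 : 2 <= r) by (eapply Rle_trans; [apply Rmax_l|exact Hz]).
  assert (HrA : 2 * A + 1 <= r) by (eapply Rle_trans; [apply Rmax_r|exact Hz]).
  set (lower := Csum (fun i => Cmul (a i) (Cpow z i)) delta).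
  assert (Hlower : Cnorm lower <= A * r ^ (delta - 1)).
  { eapply Rle_trans; [apply Csum_norm|]. unfold A; rewrite Rmult_comm, <- Rsum_scal.
    apply Rsum_le; intros i Hi. rewrite Cnorm_mul, Cnorm_pow, Rmult_comm.
    apply Rmult_le_compat_r; [apply Cnorm_ge0|]. apply Rle_pow; [lra|lia]. }
  assert (Hsmall : A * r ^ (delta - 1) <= r ^ delta / 2).
  { replace delta with (S (delta - 1)) at 2 by lia; simpl.
    pose proof (pow_le r (delta - 1) ltac:(lra)); nra. }
  assert (Hlead : Cnorm (Cmul (a delta) (Cpow z delta)) = r ^ delta)
    by (rewrite Cnorm_mul, Ha, Cnorm_one, Cnorm_pow; fold r; ring).
  unfold peval; simpl Csum; fold lower.
  pose proof (Cnorm_add lower (Cmul (a delta) (Cpow z delta))).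
  pose proof (Cnorm_add_ge (Cmul (a delta) (Cpow z delta)) lower) as Hrev.
  replace (Cadd (Cmul (a delta) (Cpow z delta)) lower)
    with (Cadd lower (Cmul (a delta) (Cpow z delta))) in Hrev by (unfold Cadd; f_equal; ring).
  pose proof (pow_le r delta ltac:(lra)). split; lra.
Qed.

Lemma peval_invariant_radius (delta : nat) (a : nat -> Cx) (R : R) :
  (2 <= delta)%nat -> 2 <= R ->
  (forall z, R <= Cnorm z -> Cnorm z ^ delta / 2 <= Cnorm (peval delta a z)) ->
  forall z, R <= Cnorm z -> R <= Cnorm (peval delta a z).
Proof.
  intros Hd HR Hp z Hz. specialize (Hp z Hz).
  assert (Cnorm z ^ 2 <= Cnorm z ^ delta) by (apply Rle_pow; [lra|lia]).
  simpl in *. nra.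
Qed.

Lemma iter_invariant (g : Cx -> Cx) (R : R) :
  (forall z, R <= Cnorm z -> R <= Cnorm (g z)) ->
  forall z m n, (m <= n)%nat -> R <= Cnorm (Nat.iter m g z) -> R <= Cnorm (Nat.iter n g z).
Proof.
  intros Hinv z m n Hmn Hm. induction Hmn as [|n _ IH]; [exact Hm|]. simpl; apply Hinv, IH.
Qed.

Lemma Rmax_upto_ge (f : nat -> R) (n k : nat) : (k <= n)%nat -> f k <= Rmax_upto f n.
Proof.
  induction n as [|n IH]; intros Hk; simpl; [replace k with 0%nat by lia; lra|].
  destruct (Nat.eq_dec k (S n)) as [->|]; [apply Rmax_r|].
  eapply Rle_trans; [apply IH; lia|apply Rmax_l].
Qed.

Lemma Cnz_false (x : Cx) : Cnz x = false -> Cnorm x = 0.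
Proof.
  destruct x as [x y]; unfold Cnz; simpl.
  destruct (Req_EM_T x 0), (Req_EM_T y 0); try discriminate. subst; intros _; apply Cnorm_zero.
Qed.

Lemma alpha_ge0 (delta N d : nat) (c : nat -> nat -> Cx) : 0 <= alpha delta N d c.
Proof.
  eapply Rle_trans; [|apply (Rmax_upto_ge _ d 0); lia]. simpl.
  eapply Rle_trans; [|apply (Rmax_upto_ge _ N 0); lia]. simpl.
  destruct (Cnz (c 0%nat 0%nat)); [|lra]. unfold Rdiv; rewrite Rmult_0_l; lra.
Qed.

Lemma alpha_bound (delta N d : nat) (c : nat -> nat -> Cx) (i j : nat) :
  (d < delta)%nat -> (i <= N)%nat -> (j <= d)%nat -> Cnz (c i j) = true ->
  INR i <= alpha delta N d c * INR (delta - j).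
Proof.
  intros Hd Hi Hj Hnz.
  assert (H : INR i / INR (delta - j) <= alpha delta N d c).
  { eapply Rle_trans; [|apply (Rmax_upto_ge _ d j Hj)]. simpl.
    eapply Rle_trans; [|apply (Rmax_upto_ge _ N i Hi)]. simpl. rewrite Hnz; lra. }
  assert (Hpos : 0 < INR (delta - j)) by (apply lt_0_INR; lia).
  apply (Rmult_le_compat_r (INR (delta - j))) in H; [|lra].
  unfold Rdiv in H; rewrite Rmult_assoc, Rinv_l, Rmult_1_r in H; lra.
Qed.

Lemma pow_Rpower_pow (r al : R) (i k : nat) :
  0 < r -> r ^ i = Rpower r (INR i) /\ Rpower r al ^ k = Rpower r (al * INR k).
Proof.
  intros Hr. rewrite <- Rpower_pow by exact Hr. split; [reflexivity|].
  rewrite <- Rpower_pow by apply exp_pos. apply Rpower_mult.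
Qed.

Lemma pow_le_Rpower_pow (r al : R) (i k : nat) :
  1 <= r -> INR i <= al * INR k -> r ^ i <= Rpower r al ^ k.
Proof.
  intros Hr H. destruct (pow_Rpower_pow r al i k ltac:(lra)) as [-> ->]. apply Rle_Rpower; auto.
Qed.

Lemma pow_eq_Rpower_pow (r al : R) (i k : nat) :
  0 < r -> INR i = al * INR k -> r ^ i = Rpower r al ^ k.
Proof. intros Hr H. destruct (pow_Rpower_pow r al i k Hr) as [-> ->]. now rewrite H. Qed.

Definition qcoef (N : nat) (c : nat -> nat -> Cx) (z : Cx) (j : nat) : Cx :=
  Csum (fun i => Cmul (c i j) (Cpow z i)) (S N).

Definition coef_mass (N : nat) (c : nat -> nat -> Cx) (j : nat) : R :=
  Rsum (fun i => Cnorm (c i j)) (S N).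

Definition total_mass (N d : nat) (c : nat -> nat -> Cx) : R :=
  Rsum (coef_mass N c) (S d).

Lemma coef_mass_ge0 (N : nat) (c : nat -> nat -> Cx) (j : nat) : 0 <= coef_mass N c j.
Proof. apply Rsum_ge0; intros; apply Cnorm_ge0. Qed.

Lemma total_mass_ge0 (N d : nat) (c : nat -> nat -> Cx) : 0 <= total_mass N d c.
Proof. apply Rsum_ge0; intros; apply coef_mass_ge0. Qed.

Lemma qcoef_bound (delta N d : nat) (c : nat -> nat -> Cx) (z : Cx) (j : nat) :
  (d < delta)%nat -> (j <= d)%nat -> 1 <= Cnorm z ->
  Cnorm (qcoef N c z j) <=
  coef_mass N c j * Rpower (Cnorm z) (alpha delta N d c) ^ (delta - j).
Proof.
  intros Hd Hj Hz. eapply Rle_trans; [apply Csum_norm|].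
  unfold coef_mass; rewrite Rmult_comm, <- Rsum_scal. apply Rsum_le; intros i Hi.
  rewrite Cnorm_mul, Cnorm_pow, (Rmult_comm (Rpower _ _ ^ _)).
  destruct (Cnz (c i j)) eqn:Hnz; [|rewrite (Cnz_false _ Hnz); lra].
  apply Rmult_le_compat_l; [apply Cnorm_ge0|].
  apply pow_le_Rpower_pow; [exact Hz|]. apply alpha_bound; auto; lia.
Qed.

Lemma qcoef_lead_lower (delta N d gamma : nat) (c : nat -> nat -> Cx) (z : Cx) :
  (d < delta)%nat -> (gamma <= N)%nat ->
  c gamma d = Cone -> (forall i, (gamma < i)%nat -> c i d = Czero) ->
  alpha delta N d c = INR gamma / INR (delta - d) ->
  2 * coef_mass N c d + 1 <= Cnorm z ->
  Rpower (Cnorm z) (alpha delta N d c) ^ (delta - d) / 2 <= Cnorm (qcoef N c z d).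
Proof.
  intros Hd HgN Hg Hz Hal Hr.
  pose proof (coef_mass_ge0 N c d) as HM.
  set (r := Cnorm z) in *.
  assert (Hr1 : 1 <= r) by lra.
  rewrite <- (pow_eq_Rpower_pow r _ gamma (delta - d)) by
    (lra || (rewrite Hal; field; apply not_0_INR; lia)).
  assert (Hpos : 0 < r ^ gamma / r) by (apply Rdiv_lt_0_compat; [apply pow_lt|]; lra).
  pose proof (Csum_dominant (fun i => Cmul (c i d) (Cpow z i))
    (fun i => r ^ gamma / r * Cnorm (c i d)) (S N) gamma ltac:(lia)) as Hdom.
  cbv beta in Hdom. rewrite Hg, Cnorm_mul, Cnorm_one, Cnorm_pow, Rsum_scal in Hdom. fold r in Hdom.
  assert (Hsmall : r ^ gamma / r * coef_mass N c d <= r ^ gamma / 2).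
  { apply (Rmult_le_reg_r (2 * r)); [lra|]. pose proof (pow_lt r gamma ltac:(lra)).
    replace (r ^ gamma / r * coef_mass N c d * (2 * r)) with (r ^ gamma * (2 * coef_mass N c d))
      by (field; lra).
    replace (r ^ gamma / 2 * (2 * r)) with (r ^ gamma * r) by field. nra. }
  unfold qcoef. enough (H : 1 * r ^ gamma - r ^ gamma / r * coef_mass N c d <=
    Cnorm (Csum (fun i => Cmul (c i d) (Cpow z i)) (S N))) by lra.
  apply Hdom.
  - intros i; pose proof (Cnorm_ge0 (c i d)); nra.
  - intros i Hi Hne. rewrite Cnorm_mul, Cnorm_pow; fold r.
    destruct (Nat.lt_ge_cases gamma i) as [Hgi|Hig].
    + rewrite (Hz i Hgi), Cnorm_zero; nra.
    + rewrite Rmult_comm. apply Rmult_le_compat_r; [apply Cnorm_ge0|].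
      apply (Rmult_le_reg_r r); [lra|]. unfold Rdiv; rewrite Rmult_assoc, Rinv_l, Rmult_1_r by lra.
      replace (r ^ i * r) with (r ^ S i) by (simpl; ring). apply Rle_pow; [lra|lia].
Qed.

(** In the normalised variable [u = |w| / rho], [rho = |z|^alpha], the monomial
    sizes [rho^(delta-j) |w|^j] all become [rho^delta u^j]. *)
Lemma weighted_term (rho u : R) (j delta : nat) :
  (j <= delta)%nat -> rho ^ (delta - j) * (u * rho) ^ j = rho ^ delta * u ^ j.
Proof.
  intros Hj. rewrite Rpow_mult_distr.
  replace delta with (delta - j + j)%nat at 2 by lia. rewrite pow_add; ring.
Qed.

Lemma qeval_qcoef (N d : nat) (c : nat -> nat -> Cx) (z w : Cx) :
  qeval N d c z w = Csum (fun j => Cmul (qcoef N c z j) (Cpow w j)) (S d).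
Proof. reflexivity. Qed.

Section QBounds.
Variables (delta N d : nat) (c : nat -> nat -> Cx) (z w : Cx).
Hypothesis (Hd : (d < delta)%nat) (Hz : 1 <= Cnorm z).
Let rho := Rpower (Cnorm z) (alpha delta N d c).
Let u := Cnorm w / rho.

Lemma scale_pos : 0 < rho.
Proof. apply exp_pos. Qed.

Lemma w_rescaled : Cnorm w = u * rho.
Proof. unfold u; field; apply Rgt_not_eq, scale_pos. Qed.

Lemma qterm_bound (j : nat) : (j <= d)%nat ->
  Cnorm (Cmul (qcoef N c z j) (Cpow w j)) <= coef_mass N c j * (rho ^ delta * u ^ j).
Proof.
  intros Hj. rewrite Cnorm_mul, Cnorm_pow, w_rescaled, <- weighted_term by lia.
  rewrite <- Rmult_assoc. apply Rmult_le_compat_r.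
  - apply pow_le; pose proof (Cnorm_ge0 w); rewrite w_rescaled in *; lra.
  - exact (qcoef_bound delta N d c z j Hd Hj Hz).
Qed.

Lemma qeval_upper :
  Cnorm (qeval N d c z w) <= total_mass N d c * (Rmax 1 u ^ d * rho ^ delta).
Proof.
  assert (Hu : 0 <= u) by (unfold u; apply Rmult_le_pos; [apply Cnorm_ge0|apply Rlt_le, Rinv_0_lt_compat, scale_pos]).
  rewrite qeval_qcoef. eapply Rle_trans; [apply Csum_norm|].
  unfold total_mass; rewrite Rmult_comm, <- Rsum_scal. apply Rsum_le; intros j Hj.
  eapply Rle_trans; [apply qterm_bound; lia|].
  replace (Rmax 1 u ^ d * rho ^ delta * coef_mass N c j)
    with (coef_mass N c j * (rho ^ delta * Rmax 1 u ^ d)) by ring.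
  apply Rmult_le_compat_l; [apply coef_mass_ge0|].
  apply Rmult_le_compat_l; [apply pow_le, Rlt_le, scale_pos|].
  eapply Rle_trans; [apply pow_incr; split; [exact Hu|apply Rmax_r]|].
  apply Rle_pow; [apply Rmax_l|lia].
Qed.

Lemma qeval_lower (gamma : nat) :
  (1 <= d)%nat -> (gamma <= N)%nat ->
  c gamma d = Cone -> (forall i, (gamma < i)%nat -> c i d = Czero) ->
  alpha delta N d c = INR gamma / INR (delta - d) ->
  2 * coef_mass N c d + 1 <= Cnorm z ->
  Rmax 1 (4 * total_mass N d c) <= u ->
  rho ^ delta * u ^ d / 4 <= Cnorm (qeval N d c z w).
Proof.
  intros Hd1 HgN Hg Hzero Hal Hr Hu.
  pose proof (Rmax_l 1 (4 * total_mass N d c)). pose proof (Rmax_r 1 (4 * total_mass N d c)).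
  pose proof (pow_lt rho delta scale_pos) as Hrho.
  assert (Hud : u ^ d = u ^ (d - 1) * u) by (replace d with (S (d - 1)) at 1 by lia; simpl; ring).
  assert (Hud1 : 0 < u ^ (d - 1)) by (apply pow_lt; lra).
  pose proof (Csum_dominant (fun j => Cmul (qcoef N c z j) (Cpow w j))
    (fun j => rho ^ delta * u ^ (d - 1) * coef_mass N c j) (S d) d ltac:(lia)) as Hdom.
  cbv beta in Hdom. rewrite Rsum_scal in Hdom; fold (total_mass N d c) in Hdom.
  assert (Hlead : rho ^ delta * u ^ d / 2 <= Cnorm (Cmul (qcoef N c z d) (Cpow w d))).
  { rewrite Cnorm_mul, Cnorm_pow, w_rescaled, Rpow_mult_distr.
    pose proof (qcoef_lead_lower delta N d gamma c z Hd HgN Hg Hzero Hal Hr) as Hl; fold rho in Hl.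
    replace (rho ^ delta * u ^ d / 2) with (rho ^ (delta - d) / 2 * (u ^ d * rho ^ d))
      by (replace delta with (delta - d + d)%nat at 2 by lia; rewrite pow_add; field).
    apply Rmult_le_compat_r; [|exact Hl].
    pose proof (pow_lt u d ltac:(lra)). pose proof (pow_lt rho d scale_pos). nra. }
  assert (Hrest : rho ^ delta * u ^ (d - 1) * total_mass N d c <= rho ^ delta * u ^ d / 4).
  { rewrite Hud. assert (u ^ (d - 1) * total_mass N d c <= u ^ (d - 1) * (u / 4))
      by (apply Rmult_le_compat_l; lra).
    nra. }
  rewrite qeval_qcoef. enough (Cnorm (Cmul (qcoef N c z d) (Cpow w d)) -
    rho ^ delta * u ^ (d - 1) * total_mass N d c <= Cnorm (Csum (fun j => Cmul (qcoef N c z j) (Cpow w j)) (S d))) by lra.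
  apply Hdom.
  - intros j; pose proof (coef_mass_ge0 N c j); apply Rmult_le_pos; [apply Rmult_le_pos|]; lra.
  - intros j Hj Hne. eapply Rle_trans; [apply qterm_bound; lia|].
    rewrite Rmult_comm. apply Rmult_le_compat_r; [apply coef_mass_ge0|].
    apply Rmult_le_compat_l; [lra|]. apply Rle_pow; [lra|lia].
Qed.

End QBounds.

Lemma ln_le (x y : R) : 0 < x -> x <= y -> ln x <= ln y.
Proof. intros Hx [Hxy| ->]; [left; apply ln_increasing|]; lra. Qed.

Lemma logplus_eq (x : R) : logplus x = ln (Rmax 1 x).
Proof.
  unfold logplus. destruct (Rle_dec x 1) as [Hx|Hx].
  - rewrite (Rmax_left 1 x), ln_1 by lra. apply Rmax_left.
    destruct (Rlt_dec 0 x) as [Hpos|Hpos].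
    + rewrite <- ln_1; apply ln_le; lra.
    + unfold ln; destruct (Rlt_dec 0 x); [contradiction|lra].
  - rewrite (Rmax_right 1 x) by lra. apply Rmax_right.
    rewrite <- ln_1; apply ln_le; lra.
Qed.

Lemma logplus_ge0 (x : R) : 0 <= logplus x.
Proof. apply Rmax_l. Qed.

Lemma ln_ge0 (x : R) : 1 <= x -> 0 <= ln x.
Proof. intros; rewrite <- ln_1; apply ln_le; lra. Qed.

Lemma logplus_upper (y u A : R) (d : nat) :
  0 <= A -> y <= A * Rmax 1 u ^ d -> logplus y <= logplus A + INR d * logplus u.
Proof.
  intros HA Hy. rewrite !logplus_eq, <- ln_pow, <- ln_mult by
    (try apply pow_lt; pose proof (Rmax_l 1 A); pose proof (Rmax_l 1 u); lra).
  pose proof (Rmax_l 1 y); pose proof (Rmax_l 1 A); pose proof (Rmax_r 1 A).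
  pose proof (pow_R1_Rle (Rmax 1 u) d (Rmax_l 1 u)).
  apply ln_le; [lra|]. apply Rmax_lub; [nra|].
  eapply Rle_trans; [exact Hy|]. apply Rmult_le_compat_r; lra.
Qed.

Lemma logplus_lower (y u B K : R) (d : nat) :
  0 < B <= 1 -> 1 <= K -> 0 <= u -> (K <= u -> B * u ^ d <= y) ->
  INR d * logplus u <= logplus y - ln B + INR d * ln K.
Proof.
  intros HB HK Hu Hy.
  assert (HlnB : ln B <= 0) by (rewrite <- ln_1; apply ln_le; lra).
  pose proof (logplus_ge0 y). pose proof (pos_INR d).
  destruct (Rle_lt_dec K u) as [HKu|HuK].
  - specialize (Hy HKu). pose proof (pow_lt u d ltac:(lra)).
    assert (Hlog : logplus u = ln u) by (rewrite logplus_eq, Rmax_right by lra; reflexivity).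
    assert (ln B + INR d * ln u <= logplus y).
    { rewrite <- ln_pow, <- ln_mult by lra. rewrite logplus_eq.
      apply ln_le; [nra|]. eapply Rle_trans; [exact Hy|apply Rmax_r]. }
    pose proof (ln_ge0 K HK). nra.
  - assert (logplus u <= ln K).
    { rewrite logplus_eq. apply ln_le; [pose proof (Rmax_l 1 u); lra|]. apply Rmax_lub; lra. }
    assert (INR d * logplus u <= INR d * ln K) by (apply Rmult_le_compat_l; lra). lra.
Qed.

Lemma logplus_pow_compare (y u A B K : R) (d : nat) :
  0 <= A -> 0 < B <= 1 -> 1 <= K -> 0 <= u ->
  y <= A * Rmax 1 u ^ d -> (K <= u -> B * u ^ d <= y) ->
  Rabs (logplus y - INR d * logplus u) <= logplus A - ln B + INR d * ln K.
Proof.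
  intros HA HB HK Hu Hup Hlow.
  pose proof (logplus_upper y u A d HA Hup). pose proof (logplus_lower y u B K d HB HK Hu Hlow).
  assert (ln B <= 0) by (rewrite <- ln_1; apply ln_le; lra).
  pose proof (ln_ge0 K HK). pose proof (pos_INR d). pose proof (logplus_ge0 A).
  assert (0 <= INR d * ln K) by (apply Rmult_le_pos; lra).
  apply Rabs_le; split; lra.
Qed.

Lemma Rpower_pow_comm (r al : R) (n : nat) : 0 < r -> Rpower (r ^ n) al = Rpower r al ^ n.
Proof.
  intros Hr. rewrite <- (Rpower_pow n r), <- (Rpower_pow n (Rpower r al)) by (apply exp_pos || exact Hr).
  rewrite !Rpower_mult, Rmult_comm; reflexivity.
Qed.

Lemma Rpower_ratio (x y al : R) :
  0 < x -> x / 2 <= y <= 2 * x -> 0 <= al ->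
  / Rpower 2 al <= Rpower x al / Rpower y al <= Rpower 2 al.
Proof.
  intros Hx Hy Hal.
  assert (Hhalf : Rpower x al / Rpower 2 al = Rpower (x / 2) al).
  { unfold Rdiv. rewrite <- Rpower_mult_distr by lra. f_equal.
    unfold Rpower. rewrite ln_Rinv, <- exp_Ropp by lra. f_equal; ring. }
  assert (Hlow : Rpower (x / 2) al <= Rpower y al) by (apply Rle_Rpower_l; lra).
  assert (Hup : Rpower y al <= Rpower (2 * x) al) by (apply Rle_Rpower_l; lra).
  rewrite <- Rpower_mult_distr, <- Hhalf in * by lra.
  pose proof (exp_pos (al * ln x)); pose proof (exp_pos (al * ln y)); pose proof (exp_pos (al * ln 2)).
  fold (Rpower x al) (Rpower y al) (Rpower 2 al) in *.
  split.
  - replace (/ Rpower 2 al) with (Rpower x al / (Rpower 2 al * Rpower x al)) by (field; lra).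
    apply Rmult_le_compat_l; [lra|]. apply Rinv_le_contravar; lra.
  - apply (Rmult_le_reg_r (Rpower y al)); [lra|].
    replace (Rpower x al / Rpower y al * Rpower y al) with (Rpower x al / Rpower 2 al * Rpower 2 al)
      by (field; lra).
    rewrite (Rmult_comm (Rpower 2 al)). apply Rmult_le_compat_r; lra.
Qed.

Definition log_ratio (al : R) (z w : Cx) : R := logplus (Cnorm w / Rpower (Cnorm z) al).

Definition step_constant (N d : nat) (c : nat -> nat -> Cx) (al : R) : R :=
  logplus (total_mass N d c * Rpower 2 al) - ln (/ (4 * Rpower 2 al))
  + INR d * ln (Rmax 1 (4 * total_mass N d c)).

Lemma Rpower_2_ge1 (al : R) : 0 <= al -> 1 <= Rpower 2 al.
Proof. intros Hal. rewrite <- (Rpower_O 2) by lra. apply Rle_Rpower; lra. Qed.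

Lemma step_constant_ge0 (N d : nat) (c : nat -> nat -> Cx) (al : R) :
  0 <= al -> 0 <= step_constant N d c al.
Proof.
  intros Hal. pose proof (Rpower_2_ge1 al Hal). unfold step_constant.
  pose proof (logplus_ge0 (total_mass N d c * Rpower 2 al)).
  pose proof (ln_ge0 _ (Rmax_l 1 (4 * total_mass N d c))). pose proof (pos_INR d).
  assert (ln (/ (4 * Rpower 2 al)) <= 0)
    by (rewrite <- ln_1; apply ln_le; [apply Rinv_0_lt_compat; lra|];
        rewrite <- Rinv_1; apply Rinv_le_contravar; lra).
  assert (0 <= INR d * ln (Rmax 1 (4 * total_mass N d c))) by (apply Rmult_le_pos; lra). lra.
Qed.

(** One-step defect: if [|z|] is large and [z'] has size [|z|^delta] up to a
    factor 2 (as [z' = p z] will), then [log+ (|q(z,w)| / |z'|^alpha)] equals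
    [d log+ (|w| / |z|^alpha)] up to [step_constant]. *)
Lemma log_ratio_defect (delta N d gamma : nat) (c : nat -> nat -> Cx) (z z' w : Cx) :
  (1 <= d)%nat -> (d < delta)%nat -> (gamma <= N)%nat ->
  c gamma d = Cone -> (forall i, (gamma < i)%nat -> c i d = Czero) ->
  alpha delta N d c = INR gamma / INR (delta - d) ->
  2 * coef_mass N c d + 1 <= Cnorm z ->
  Cnorm z ^ delta / 2 <= Cnorm z' <= 2 * Cnorm z ^ delta ->
  Rabs (log_ratio (alpha delta N d c) z' (qeval N d c z w) - INR d * log_ratio (alpha delta N d c) z w)
  <= step_constant N d c (alpha delta N d c).
Proof.
  intros Hd1 Hd HgN Hg Hzero Hal Hz Hz'. pose proof (coef_mass_ge0 N c d).
  set (al := alpha delta N d c) in *. pose proof (alpha_ge0 delta N d c) as Hal0; fold al in Hal0.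
  set (P := Rpower 2 al). pose proof (Rpower_2_ge1 al Hal0) as HP; fold P in HP.
  set (M := total_mass N d c). pose proof (total_mass_ge0 N d c) as HM; fold M in HM.
  unfold log_ratio, step_constant; fold P M.
  set (r := Cnorm z) in *. set (rho := Rpower r al). set (u := Cnorm w / rho).
  pose proof (exp_pos (al * ln r)) as Hrho; fold (Rpower r al) rho in Hrho.
  assert (Hu : 0 <= u) by (apply Rmult_le_pos; [apply Cnorm_ge0|apply Rlt_le, Rinv_0_lt_compat, Hrho]).
  set (T := Rpower (Cnorm z') al).
  assert (HTpos : 0 < T) by apply exp_pos.
  assert (Hratio : / P <= rho ^ delta / T <= P).
  { unfold T, rho, P. rewrite <- Rpower_pow_comm by lra.
    apply Rpower_ratio; [apply pow_lt|split|]; lra. }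
  apply logplus_pow_compare; [apply Rmult_le_pos; lra| | |exact Hu| |].
  - split; [apply Rinv_0_lt_compat; lra|rewrite <- Rinv_1; apply Rinv_le_contravar; lra].
  - apply Rmax_l.
  - pose proof (qeval_upper delta N d c z w Hd ltac:(unfold r in *; lra)) as Hq. fold al r rho u M in Hq.
    pose proof (pow_le (Rmax 1 u) d ltac:(pose proof (Rmax_l 1 u); lra)).
    eapply Rle_trans; [apply Rmult_le_compat_r; [apply Rlt_le, Rinv_0_lt_compat, HTpos|exact Hq]|].
    replace (M * (Rmax 1 u ^ d * rho ^ delta) * / T) with (M * Rmax 1 u ^ d * (rho ^ delta / T))
      by (unfold Rdiv; ring).
    replace (M * P * Rmax 1 u ^ d) with (M * Rmax 1 u ^ d * P) by ring.
    apply Rmult_le_compat_l; [apply Rmult_le_pos|]; lra.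
  - intros HKu.
    pose proof (qeval_lower delta N d c z w Hd ltac:(unfold r in *; lra) gamma Hd1 HgN Hg Hzero Hal
      ltac:(unfold r in *; lra) HKu) as Hq. fold al r rho u in Hq.
    eapply Rle_trans; [|apply Rmult_le_compat_r; [apply Rlt_le, Rinv_0_lt_compat, HTpos|exact Hq]].
    replace (rho ^ delta * u ^ d / 4 * / T) with (u ^ d / 4 * (rho ^ delta / T)) by (unfold Rdiv; ring).
    replace (/ (4 * P) * u ^ d) with (u ^ d / 4 * / P) by (field; lra).
    apply Rmult_le_compat_l; [pose proof (pow_le u d Hu); lra|lra].
Qed.

Lemma log_ratio_step (delta d gamma N : nat) (a : nat -> Cx) (c : nat -> nat -> Cx) :
  (2 <= delta)%nat -> a delta = Cone -> (1 <= d)%nat -> (d < delta)%nat -> (gamma <= N)%nat ->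
  c gamma d = Cone -> (forall i, (gamma < i)%nat -> c i d = Czero) ->
  alpha delta N d c = INR gamma / INR (delta - d) ->
  exists R Cst, 0 <= Cst /\
    (forall z, R <= Cnorm z -> R <= Cnorm (peval delta a z)) /\
    (forall z w, R <= Cnorm z ->
       Rabs (log_ratio (alpha delta N d c) (peval delta a z) (qeval N d c z w)
             - INR d * log_ratio (alpha delta N d c) z w) <= Cst).
Proof.
  intros Hdl Ha Hd1 Hd HgN Hg Hzero Hal.
  destruct (peval_growth delta a Ha ltac:(lia)) as [R0 [HR0 Hp]].
  set (R := Rmax R0 (2 * coef_mass N c d + 1)).
  assert (HR : R0 <= R) by apply Rmax_l.
  assert (HRc : 2 * coef_mass N c d + 1 <= R) by apply Rmax_r.
  exists R, (step_constant N d c (alpha delta N d c)).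
  split; [apply step_constant_ge0, alpha_ge0|split].
  - apply peval_invariant_radius; [lia|lra|]. intros z Hz; apply Hp; lra.
  - intros z w Hz. apply (log_ratio_defect delta N d gamma); auto; [lra|apply Hp; lra].
Qed.

(** Continuity (in the epsilon-delta sense for [Cnorm]) of polynomial maps and
    their iterates, needed to propagate escape from a point to a neighbourhood. *)
Definition cont (g : Cx -> Cx) : Prop :=
  forall z eps, 0 < eps -> exists eta, 0 < eta /\
    forall z', Cnorm (Csub z' z) < eta -> Cnorm (Csub (g z') (g z)) < eps.

Lemma cont_const (k : Cx) : cont (fun _ => k).
Proof.
  intros z eps Heps; exists 1; split; [lra|]; intros z' _.
  replace (Csub k k) with Czero by (unfold Csub, Czero; f_equal; ring). rewrite Cnorm_zero; lra.
Qed.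

Lemma cont_id : cont (fun z => z).
Proof. intros z eps Heps; exists eps; split; auto. Qed.

Lemma cont_comp (g h : Cx -> Cx) : cont g -> cont h -> cont (fun z => g (h z)).
Proof.
  intros Hg Hh z eps Heps.
  destruct (Hg (h z) eps Heps) as [e1 [He1 H1]]. destruct (Hh z e1 He1) as [e2 [He2 H2]].
  exists e2; split; auto.
Qed.

Lemma cont_joint (g h : Cx -> Cx) (z : Cx) (eta : R) :
  cont g -> cont h -> 0 < eta -> exists e, 0 < e /\ forall z', Cnorm (Csub z' z) < e ->
    Cnorm (Csub (g z') (g z)) < eta /\ Cnorm (Csub (h z') (h z)) < eta.
Proof.
  intros Hg Hh Heta.
  destruct (Hg z eta Heta) as [e1 [He1 H1]]. destruct (Hh z eta Heta) as [e2 [He2 H2]].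
  exists (Rmin e1 e2); split; [apply Rmin_pos; auto|]. intros z' Hz'.
  pose proof (Rmin_l e1 e2); pose proof (Rmin_r e1 e2). split; [apply H1|apply H2]; lra.
Qed.

Lemma cont_add (g h : Cx -> Cx) : cont g -> cont h -> cont (fun z => Cadd (g z) (h z)).
Proof.
  intros Hg Hh z eps Heps.
  destruct (cont_joint g h z (eps / 2) Hg Hh ltac:(lra)) as [e [He H]].
  exists e; split; [exact He|]. intros z' Hz'. destruct (H z' Hz') as [H1 H2].
  replace (Csub (Cadd (g z') (h z')) (Cadd (g z) (h z)))
    with (Cadd (Csub (g z') (g z)) (Csub (h z') (h z))) by (unfold Cadd, Csub; simpl; f_equal; ring).
  pose proof (Cnorm_add (Csub (g z') (g z)) (Csub (h z') (h z))). lra.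
Qed.

(** Uses [g'h' - gh = (g'-g)(h'-h) + (g'-g) h + g (h'-h)]. *)
Lemma cont_mul (g h : Cx -> Cx) : cont g -> cont h -> cont (fun z => Cmul (g z) (h z)).
Proof.
  intros Hg Hh z eps Heps.
  set (A := Cnorm (g z)). set (B := Cnorm (h z)).
  pose proof (Cnorm_ge0 (g z)) as HA. pose proof (Cnorm_ge0 (h z)) as HB. fold A B in HA, HB.
  set (eta := Rmin 1 (eps / (1 + A + B))).
  assert (Heta : 0 < eta) by (apply Rmin_pos; [lra|apply Rdiv_lt_0_compat; lra]).
  assert (Heta1 : eta <= 1) by apply Rmin_l.
  assert (Hetae : eta * (1 + A + B) <= eps).
  { pose proof (Rmin_r 1 (eps / (1 + A + B))) as Hr; fold eta in Hr.
    apply (Rmult_le_compat_r (1 + A + B)) in Hr; [|lra].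
    unfold Rdiv in Hr; rewrite Rmult_assoc, Rinv_l, Rmult_1_r in Hr; lra. }
  destruct (cont_joint g h z eta Hg Hh Heta) as [e [He H]].
  exists e; split; [exact He|]. intros z' Hz'. destruct (H z' Hz') as [H1 H2].
  set (dg := Csub (g z') (g z)) in *. set (dh := Csub (h z') (h z)) in *.
  replace (Csub (Cmul (g z') (h z')) (Cmul (g z) (h z)))
    with (Cadd (Cadd (Cmul dg dh) (Cmul dg (h z))) (Cmul (g z) dh))
    by (unfold dg, dh, Cadd, Csub, Cmul; simpl; f_equal; ring).
  pose proof (Cnorm_add (Cadd (Cmul dg dh) (Cmul dg (h z))) (Cmul (g z) dh)) as Hn1.
  pose proof (Cnorm_add (Cmul dg dh) (Cmul dg (h z))) as Hn2.
  rewrite Cnorm_mul in Hn1; rewrite !Cnorm_mul in Hn2. fold A B in Hn1, Hn2.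
  pose proof (Cnorm_ge0 dg). pose proof (Cnorm_ge0 dh).
  assert (Cnorm dg * B <= eta * B) by (apply Rmult_le_compat_r; lra).
  assert (A * Cnorm dh <= A * eta) by (apply Rmult_le_compat_l; lra).
  assert (Cnorm dg * Cnorm dh < eta) by nra.
  lra.
Qed.

Lemma cont_pow (n : nat) : cont (fun z => Cpow z n).
Proof. induction n as [|n IH]; simpl; [apply cont_const|]. apply cont_mul; [exact IH|apply cont_id]. Qed.

Lemma cont_iter_peval (delta : nat) (a : nat -> Cx) (m : nat) : cont (Nat.iter m (peval delta a)).
Proof.
  assert (Hp : cont (peval delta a)).
  { unfold peval. generalize (S delta); intros n.
    induction n as [|n IH]; simpl; [apply cont_const|].
    apply cont_add; [exact IH|]. apply cont_mul; [apply cont_const|apply cont_pow]. }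
  induction m as [|m IH]; simpl; [apply cont_id|]. exact (cont_comp _ _ Hp IH).
Qed.

(** Near the closure of [V] this
    comes from [x] escaping and continuity; away from it the ball misses [V]. *)
Lemma local_escape (delta : nat) (a : nat -> Cx) (R : R) (V : Cx -> Prop) :
  (forall z, in_closure V z -> A_p delta a z) ->
  forall x, exists D, 0 < D /\ exists m : nat, INR m * D <= 1 /\
    forall z, V z -> Cnorm (Csub z x) < 2 * D -> R <= Cnorm (Nat.iter m (peval delta a) z).
Proof.
  intros HV x. destruct (classic (in_closure V x)) as [Hx|Hx].
  - destruct (HV x Hx (R + 1)) as [m Hm]. specialize (Hm m (Nat.le_refl m)).
    destruct (cont_iter_peval delta a m x 1 ltac:(lra)) as [eta [Heta Hcont]].
    pose proof (pos_INR m) as Hm0.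
    exists (Rmin (eta / 2) (/ (INR m + 1))).
    split; [apply Rmin_pos; [lra|apply Rinv_0_lt_compat; lra]|]. exists m. split.
    + apply (Rle_trans _ (INR m * / (INR m + 1))); [apply Rmult_le_compat_l; [lra|apply Rmin_r]|].
      apply (Rmult_le_reg_r (INR m + 1)); [lra|]. rewrite Rmult_assoc, Rinv_l; lra.
    + intros z _ Hz. pose proof (Rmin_l (eta / 2) (/ (INR m + 1))).
      specialize (Hcont z ltac:(lra)).
      pose proof (Cnorm_sub_ge (Nat.iter m (peval delta a) x) (Nat.iter m (peval delta a) z)).
      rewrite Cnorm_sub_sym in Hcont. lra.
  - apply not_all_ex_not in Hx as [e He]. apply imply_to_and in He as [He Hfar].
    exists (e / 2); split; [lra|]. exists 0%nat; split; [simpl; lra|].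
    intros z Hz Hzx. exfalso. apply Hfar. exists z. rewrite Cnorm_sub_sym. split; [exact Hz|lra].
Qed.

Lemma Cnorm_box (x y u v D : R) :
  Rabs (x - u) < D -> Rabs (y - v) < D -> Cnorm (Csub (x, y) (u, v)) < 2 * D.
Proof.
  intros H1 H2. pose proof (Rabs_pos (x - u)).
  unfold Cnorm, Csub; simpl. rewrite <- (sqrt_square (2 * D)) by lra.
  apply Rabs_def2 in H1 as [H1l H1r]; apply Rabs_def2 in H2 as [H2l H2r].
  assert ((x - u) * (x - u) < D * D) by nra. assert ((y - v) * (y - v) < D * D) by nra.
  pose proof (Rle_0_sqr (x - u)); pose proof (Rle_0_sqr (y - v)); unfold Rsqr in *.
  apply sqrt_lt_1_alt. split; lra.
Qed.

Lemma box_uniform_index (Q : nat -> Cx -> Prop) (V : Cx -> Prop) (B : R) :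
  (forall x, exists D, 0 < D /\ exists m : nat, INR m * D <= 1 /\
     forall z, V z -> Cnorm (Csub z x) < 2 * D -> Q m z) ->
  exists k : nat, forall z, V z -> Cnorm z <= B -> exists m, (m <= k)%nat /\ Q m z.
Proof.
  intros Hloc.
  set (gauge := fun u v => constructive_indefinite_description _ (Hloc (u, v))).
  set (Dp := fun u v => mkposreal (proj1_sig (gauge u v)) (proj1 (proj2_sig (gauge u v)))).
  destruct (Compactness.compactness_value_2d (- B) B (- B) B Dp) as [d0 Hd0].
  destruct (INR_unbounded (/ d0)) as [k Hk].
  exists k. intros [x y] Hz HzB.
  pose proof (Rabs_fst_le (x, y)); pose proof (Rabs_snd_le (x, y)); simpl in *.
  pose proof (Rle_abs x); pose proof (Rle_abs (- x)); pose proof (Rle_abs y); pose proof (Rle_abs (- y)).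
  rewrite !Rabs_Ropp in *.
  apply NNPP; intros Hnot. apply (Hd0 x y ltac:(lra) ltac:(lra)).
  intros [u [v [_ [_ [Hxu [Hyv Hd0D]]]]]]. apply Hnot.
  unfold Dp in Hxu, Hyv, Hd0D; simpl in Hxu, Hyv, Hd0D.
  destruct (gauge u v) as [D [HD [m [HmD Hball]]]]; simpl in *.
  exists m; split; [|exact (Hball (x, y) Hz (Cnorm_box x y u v D Hxu Hyv))].
  assert (Hd0pos : 0 < d0) by apply cond_pos.
  assert (INR m <= / d0).
  { apply (Rmult_le_reg_r d0); [exact Hd0pos|]. rewrite Rinv_l by lra.
    eapply Rle_trans; [|exact HmD]. apply Rmult_le_compat_l; [apply pos_INR|exact Hd0D]. }
  apply INR_le. lra.
Qed.

Lemma uniform_escape (delta : nat) (a : nat -> Cx) (R : R) (V : Cx -> Prop) :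
  (forall z, R <= Cnorm z -> R <= Cnorm (peval delta a z)) ->
  (forall z, in_closure V z -> A_p delta a z) ->
  exists k : nat, forall z n, V z -> (k <= n)%nat -> R <= Cnorm (Nat.iter n (peval delta a) z).
Proof.
  intros Hinv HV.
  destruct (box_uniform_index (fun m z => R <= Cnorm (Nat.iter m (peval delta a) z)) V R
    (local_escape delta a R V HV)) as [k Hk].
  exists k. intros z n Hz Hn.
  destruct (Rle_lt_dec R (Cnorm z)) as [Hfar|Hnear].
  - apply (iter_invariant _ R Hinv z 0); [lia|exact Hfar].
  - destruct (Hk z Hz ltac:(lra)) as [m [Hm Hesc]].
    apply (iter_invariant _ R Hinv z m); [lia|exact Hesc].
Qed.

Lemma geometric_tail (g : nat -> R) (C r : R) (k : nat) :
  0 <= C -> 0 <= r < 1 ->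
  (forall n, (k <= n)%nat -> Rabs (g (S n) - g n) <= C * r ^ n) ->
  forall n j, (k <= n)%nat -> Rabs (g (n + j)%nat - g n) <= C * r ^ n / (1 - r).
Proof.
  intros HC Hr Hinc n j Hn.
  assert (Hpart : Rabs (g (n + j)%nat - g n) <= C * r ^ n * (1 - r ^ j) / (1 - r)).
  { induction j as [|j IH].
    - rewrite Nat.add_0_r, Rminus_diag, Rabs_R0. unfold Rdiv; simpl; rewrite Rminus_diag. lra.
    - replace (n + S j)%nat with (S (n + j)) by lia.
      replace (g (S (n + j)) - g n) with ((g (S (n + j)) - g (n + j)%nat) + (g (n + j)%nat - g n)) by ring.
      eapply Rle_trans; [apply Rabs_triang|].
      pose proof (Hinc (n + j)%nat ltac:(lia)) as Hstep. rewrite pow_add in Hstep.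
      replace (C * r ^ n * (1 - r ^ S j) / (1 - r))
        with (C * (r ^ n * r ^ j) + C * r ^ n * (1 - r ^ j) / (1 - r)) by (simpl; field; lra).
      lra. }
  eapply Rle_trans; [exact Hpart|]. unfold Rdiv. apply Rmult_le_compat_r; [apply Rlt_le, Rinv_0_lt_compat; lra|].
  pose proof (pow_le r j (proj1 Hr)). pose proof (pow_le r n (proj1 Hr)).
  assert (0 <= C * r ^ n) by (apply Rmult_le_pos; lra). nra.
Qed.

Lemma geometric_small (C r : R) : 0 <= C -> 0 <= r < 1 ->
  forall eps, 0 < eps -> exists n0 : nat, forall n, (n0 <= n)%nat -> C * r ^ n / (1 - r) < eps.
Proof.
  intros HC Hr eps Heps.
  destruct (pow_lt_1_zero r ltac:(rewrite Rabs_right; lra) (eps * (1 - r) / (C + 1))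
    ltac:(apply Rdiv_lt_0_compat; [apply Rmult_lt_0_compat|]; lra)) as [n0 Hn0].
  exists n0. intros n Hn. specialize (Hn0 n Hn). rewrite Rabs_right in Hn0 by (apply Rle_ge, pow_le; lra).
  apply (Rmult_lt_reg_r (1 - r)); [lra|]. unfold Rdiv; rewrite Rmult_assoc, Rinv_l, Rmult_1_r by lra.
  apply (Rmult_lt_compat_l (C + 1)) in Hn0; [|lra].
  replace ((C + 1) * (eps * (1 - r) / (C + 1))) with (eps * (1 - r)) in Hn0 by (field; lra).
  pose proof (pow_le r n (proj1 Hr)). nra.
Qed.

Lemma uniform_limit_geometric (X : Type) (g : nat -> X -> R) (P : X -> Prop) (C r : R) (k : nat) :
  0 <= C -> 0 <= r < 1 ->
  (forall x n, P x -> (k <= n)%nat -> Rabs (g (S n) x - g n x) <= C * r ^ n) ->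
  exists G : X -> R, (forall x, P x -> Un_cv (fun n => g n x) (G x)) /\
    (forall eps, eps > 0 -> exists n0 : nat, forall n x, (n0 <= n)%nat -> P x ->
       Rabs (g n x - G x) < eps).
Proof.
  intros HC Hr Hinc.
  assert (Htail : forall x n j, P x -> (k <= n)%nat ->
    Rabs (g (n + j)%nat x - g n x) <= C * r ^ n / (1 - r))
    by (intros x n j Hx; apply (geometric_tail (fun n => g n x) C r k HC Hr); auto).
  assert (Hlim : forall x, exists l, P x -> Un_cv (fun n => g n x) l).
  { intros x. destruct (classic (P x)) as [Hx|Hx]; [|exists 0; tauto].
    destruct (R_complete (fun n => g n x)) as [l Hl]; [|exists l; auto].
    intros eps Heps. destruct (geometric_small C r HC Hr eps Heps) as [n0 Hn0].
    exists (Nat.max n0 k). intros n m Hn Hm. unfold Rdist.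
    destruct (Nat.le_ge_cases n m) as [Hnm|Hmn].
    - replace m with (n + (m - n))%nat by lia. rewrite Rabs_minus_sym.
      eapply Rle_lt_trans; [apply Htail; auto; lia|apply Hn0; lia].
    - replace n with (m + (n - m))%nat by lia.
      eapply Rle_lt_trans; [apply Htail; auto; lia|apply Hn0; lia]. }
  set (G := fun x => proj1_sig (constructive_indefinite_description _ (Hlim x))).
  assert (HG : forall x, P x -> Un_cv (fun n => g n x) (G x))
    by (intros x; exact (proj2_sig (constructive_indefinite_description _ (Hlim x)))).
  exists G; split; [exact HG|]. intros eps Heps.
  destruct (geometric_small C r HC Hr (eps / 2) ltac:(lra)) as [n0 Hn0].
  exists (Nat.max n0 k). intros n x Hn Hx.
  destruct (HG x Hx (eps / 2) ltac:(lra)) as [M HM].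
  specialize (HM (n + M)%nat ltac:(lia)). unfold Rdist in HM.
  specialize (Htail x n M Hx ltac:(lia)). specialize (Hn0 n ltac:(lia)).
  replace (g n x - G x) with ((g (n + M)%nat x - G x) - (g (n + M)%nat x - g n x)) by ring.
  eapply Rle_lt_trans; [apply Rabs_triang|]. rewrite Rabs_Ropp. lra.
Qed.

Lemma fiter_fst (delta N d : nat) (a : nat -> Cx) (c : nat -> nat -> Cx) (n : nat) (z w : Cx) :
  fst (fiter delta N d a c n (z, w)) = Nat.iter n (peval delta a) z.
Proof. induction n as [|n IH]; [reflexivity|]. unfold fiter in *; simpl; now rewrite IH. Qed.

Lemma Gn_increment (delta N d : nat) (a : nat -> Cx) (c : nat -> nat -> Cx) (al : R) (n : nat) (z w : Cx) :
  (1 <= d)%nat ->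
  Gn delta N d a c al (S n) z w - Gn delta N d a c al n z w =
  (/ INR d) ^ S n *
  (log_ratio al (peval delta a (fst (fiter delta N d a c n (z, w))))
     (qeval N d c (fst (fiter delta N d a c n (z, w))) (snd (fiter delta N d a c n (z, w))))
   - INR d * log_ratio al (fst (fiter delta N d a c n (z, w))) (snd (fiter delta N d a c n (z, w)))).
Proof.
  intros Hd. assert (HdR : INR d <> 0) by (apply not_0_INR; lia).
  unfold Gn, log_ratio; cbv zeta.
  change (fiter delta N d a c (S n) (z, w)) with (fmap delta N d a c (fiter delta N d a c n (z, w))).
  destruct (fiter delta N d a c n (z, w)) as [zn wn]; unfold fmap; simpl fst; simpl snd.
  rewrite pow_inv. simpl. field. split; [apply pow_nonzero|]; exact HdR.
Qed.

Lemma Gn_increment_bound (delta N d : nat) (a : nat -> Cx) (c : nat -> nat -> Cx)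
  (al R Cst : R) (n : nat) (z w : Cx) :
  (1 <= d)%nat ->
  (forall z w, R <= Cnorm z ->
     Rabs (log_ratio al (peval delta a z) (qeval N d c z w) - INR d * log_ratio al z w) <= Cst) ->
  R <= Cnorm (Nat.iter n (peval delta a) z) ->
  Rabs (Gn delta N d a c al (S n) z w - Gn delta N d a c al n z w) <= Cst * (/ INR d) ^ n.
Proof.
  intros Hd Hstep Hfar. rewrite <- (fiter_fst delta N d a c n z w) in Hfar.
  rewrite Gn_increment by exact Hd.
  destruct (fiter delta N d a c n (z, w)) as [zn wn]; cbn [fst snd] in *.
  specialize (Hstep zn wn Hfar).
  assert (Hinv : 0 < / INR d <= 1).
  { assert (1 <= INR d) by (apply (le_INR 1); exact Hd).
    split; [apply Rinv_0_lt_compat; lra|rewrite <- Rinv_1; apply Rinv_le_contravar; lra]. }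
  rewrite Rabs_mult, Rabs_right by (apply Rle_ge, pow_le; lra).
  change ((/ INR d) ^ S n) with (/ INR d * (/ INR d) ^ n).
  set (defect := Rabs (log_ratio al (peval delta a zn) (qeval N d c zn wn)
                       - INR d * log_ratio al zn wn)) in *.
  pose proof (pow_le (/ INR d) n ltac:(lra)). assert (0 <= defect) by apply Rabs_pos.
  assert ((/ INR d) ^ n * defect <= (/ INR d) ^ n * Cst) by (apply Rmult_le_compat_l; lra).
  assert (/ INR d * ((/ INR d) ^ n * defect) <= 1 * ((/ INR d) ^ n * defect))
    by (apply Rmult_le_compat_r; [apply Rmult_le_pos|]; lra).
  lra.
Qed.

Theorem proposition4p12
  (delta d gamma N : nat) (a : nat -> Cx) (c : nat -> nat -> Cx) (V : Cx -> Prop) :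
  (2 <= delta)%nat -> a delta = Cone ->
  (2 <= d)%nat -> (gamma <= N)%nat ->
  c gamma d = Cone -> (forall i, (gamma < i)%nat -> c i d = Czero) ->
  (d < delta)%nat ->
  alpha delta N d c = INR gamma / INR (delta - d) ->
  ~ poly_product N d c ->
  (forall z, in_closure V z -> A_p delta a z) ->
  exists G : Cx -> Cx -> R,
    (forall z w, V z -> Un_cv (fun n => Gn delta N d a c (alpha delta N d c) n z w) (G z w)) /\
    (forall eps, eps > 0 -> exists n0 : nat, forall n z w, (n0 <= n)%nat -> V z ->
       Rabs (Gn delta N d a c (alpha delta N d c) n z w - G z w) < eps).
Proof.
  intros Hdelta Ha Hd HgN Hg Hzero Hdd Hal _ HV.
  destruct (log_ratio_step delta d gamma N a c Hdelta Ha ltac:(lia) Hdd HgN Hg Hzero Hal)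
    as [R [Cst [HCst [Hinv Hstep]]]].
  destruct (uniform_escape delta a R V Hinv HV) as [k Hk].
  assert (Hdr : 2 <= INR d) by (replace 2 with (INR 2) by reflexivity; apply le_INR; exact Hd).
  assert (Hr : 0 <= / INR d < 1)
    by (split; [apply Rlt_le, Rinv_0_lt_compat; lra|apply (Rmult_lt_reg_l (INR d)); [lra|];
        rewrite Rinv_r by lra; lra]).
  destruct (uniform_limit_geometric (Cx * Cx)
    (fun n zw => Gn delta N d a c (alpha delta N d c) n (fst zw) (snd zw))
    (fun zw => V (fst zw)) Cst (/ INR d) k HCst Hr) as [G [Hpoint Hunif]].
  - intros [z w] n Hz Hn. apply (Gn_increment_bound delta N d a c _ R); [lia|exact Hstep|].
    exact (Hk z n Hz Hn).
  - exists (fun z w => G (z, w)). split.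
    + intros z w Hz. exact (Hpoint (z, w) Hz).
    + intros eps Heps. destruct (Hunif eps Heps) as [n0 Hn0].
      exists n0. intros n z w Hn Hz. exact (Hn0 n (z, w) Hn Hz).
Qed.
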